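(* Let $N$ be a set of players and $S$ a set of strategies. Then there is an $|N|$-player canonical misinformation game $mG$ on $|S|$ strategies such that the length of the Adaptation Procedure on $mG$ satisfies $\mathfrak{L}_{\mathcal{AD}}(mG)=|S|$.
   Context: A normal-form game is $G=\langle N,S,P\rangle$ with finite players $N$, finite pure strategy sets $S_i$, positions (pure strategy profiles) $S=\times_i S_i$, payoffs $P_i:S\to\mathbb{R}$; $|S|$ is the number of positions. A misinformation game $mG=\langle G^0,G^1,\dots,G^{|N|}\rangle$ consists of the actual game $G^0$ and subjective games $G^i$; it is canonical if all $G^i=\langle N,S,P^i\rangle$ differ from $G^0$ only in payoffs and in every $G^i$ all players have equally many pure strategies. $NME(mG)$ is the set of profiles $\sigma=(\sigma_1,\dots,\sigma_{|N|})$ such that each $\sigma_i$ is player $i$'s component of some Nash equilibrium of $G^i$. $\chi(\sigma)=\mathrm{supp}(\sigma_1)\times\dots\times\mathrm{supp}(\sigma_{|N|})$. For $\vec v\in S$, $mG_{\vec v}$ is obtained by replacing, in every $P^i$ ($i\ge1$), the payoff vector at position $\vec v$ by $P^0(\vec v)$. For a set $M$ of misinformation games, $\mathcal{AD}(M)=\{mG_{\vec u}: mG\in M,\sigma\in NME(mG),\vec u\in\chi(\sigma)\}$, $\mathcal{AD}^{(0)}(M)=M$, $\mathcal{AD}^{(t+1)}(M)=\mathcal{AD}^{(t)}(\mathcal{AD}(M))$. The length $\mathfrak{L}_{\mathcal{AD}}(mG)$ is the least $t\ge0$ with $\mathcal{AD}^{(t+1)}(\{mG\})=\mathcal{AD}^{(t)}(\{mG\})$.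 *)

From HB Require Import structures.
From mathcomp Require Import all_boot all_order all_algebra.
From mathcomp Require Import reals.
Set Implicit Arguments. Unset Strict Implicit. Unset Printing Implicit Defensive.
Import Order.TTheory GRing.Theory Num.Theory.
Local Open Scope ring_scope.

Section MisGames.
Variables (R : realType) (n m : nat).
(* players are 'I_n, every player's pure strategies are 'I_m (canonical mG) *)

Definition position := {ffun 'I_n -> 'I_m}.

Definition payoff := position -> 'I_n -> R.

(* canonical misinformation game: actual game G^0 and subjective games G^i,
   all on the same players and strategy sets, differing only in payoffs *)
Record mgame := MGame { actual : payoff ; subj : 'I_n -> payoff }.

Definition is_mixed (s : 'I_m -> R) :=
  (forall a, 0 <= s a) /\ \sum_(a < m) s a = 1.

Definition exp_payoff (P : payoff) (s : 'I_n -> 'I_m -> R) (i : 'I_n) : R :=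
  \sum_(p : position) (\prod_(j < n) s j (p j)) * P p i.

Definition deviate (s : 'I_n -> 'I_m -> R) (i : 'I_n) (t : 'I_m -> R) :=
  fun j => if j == i then t else s j.

Definition is_NE (P : payoff) (s : 'I_n -> 'I_m -> R) :=
  (forall j, is_mixed (s j)) /\
  forall i t, is_mixed t -> exp_payoff P (deviate s i t) i <= exp_payoff P s i.

Definition NME (g : mgame) (sigma : 'I_n -> 'I_m -> R) :=
  forall i, exists tau, is_NE (subj g i) tau /\ tau i = sigma i.

Definition chi (sigma : 'I_n -> 'I_m -> R) (v : position) :=
  forall i, 0 < sigma i (v i).

Definition update (g : mgame) (v : position) : mgame :=
  MGame (actual g) (fun i p => if p == v then actual g v else subj g i p).

Definition mset := mgame -> Prop.

Definition AD (M : mset) : mset :=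
  fun g => exists h sigma u, [/\ M h, NME h sigma, chi sigma u & g = update h u].

Definition ADiter (t : nat) (M : mset) : mset := iter t AD M.

Definition mset_eq (A B : mset) := forall g, A g <-> B g.

Definition singleton_mset (g : mgame) : mset := fun h => h = g.

Definition AD_length_is (g : mgame) (L : nat) :=
  mset_eq (ADiter L.+1 (singleton_mset g)) (ADiter L (singleton_mset g)) /\
  forall t, (t < L)%N ->
    ~ mset_eq (ADiter t.+1 (singleton_mset g)) (ADiter t (singleton_mset g)).

End MisGames.

From mathcomp Require Import all_boot all_order all_algebra.
From mathcomp Require Import reals.
From Stdlib Require Import FunctionalExtensionality.
Set Implicit Arguments. Unset Strict Implicit. Unset Printing Implicit Defensive.
Import Order.TTheory GRing.Theory Num.Theory.
Local Open Scope ring_scope.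

(* All games considered are [patched A F U]: the subjective payoffs are the
   actual ones [A] on the set [U] of already corrected positions and [F]
   elsewhere, and correcting [u] turns it into [patched A F (u |: U)].  So the
   Adaptation Procedure acts on the sets [U] alone, adding one position
   supported by a natural misinformed equilibrium at each step, and its length
   is the time at which these families of sets stop changing.
   With several players (actual payoffs 0; in G^i player i gets 0 and the
   others -1) every position is supported, so after t > 0 steps the reached
   sets are the nonempty ones of size at most t.  With one player (actual
   payoff 0, believed payoff 1) equilibria avoid corrected positions until all
   are corrected, so after t steps the reached sets are those of size t.  Both
   families stabilise exactly at t = |S|. *)

Section Growth.
Variables (T : finType) (S : {set T} -> T -> Prop).
Implicit Types (U V : {set T}) (u v : T).

Definition setfam_eq (P Q : {set T} -> Prop) := forall U, P U <-> Q U.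

Definition grow (P : {set T} -> Prop) : {set T} -> Prop :=
  fun V => exists U u, [/\ P U, S U u & V = u |: U].

Definition reached (t : nat) : {set T} -> Prop := iter t grow (fun U => U = set0).

Definition growth_length (L : nat) :=
  setfam_eq (reached L.+1) (reached L) /\
  forall t, (t < L)%N -> ~ setfam_eq (reached t.+1) (reached t).

Lemma card_reached t U : reached t U -> (#|U| <= t)%N.
Proof.
elim: t U => [U ->|t IHt _ [U [u [/IHt cardU _ ->]]]]; first by rewrite cards0.
by rewrite cardsU1; exact: leq_add (leq_b1 _) cardU.
Qed.

Lemma exists_set_card k : (k <= #|T|)%N -> exists U : {set T}, #|U| = k.
Proof.
case/card_geqP=> s [uniq_s size_s _].
by exists [set x in s]; rewrite cardsE -size_s; apply/card_uniqP.
Qed.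

Lemma card_ltT (U : {set T}) : U != setT -> (#|U| < #|T|)%N.
Proof. by rewrite -properT -cardsT; apply: proper_card. Qed.

Section FreshSupport.
Hypothesis S_fresh : forall U u, u \notin U -> S U u.

Lemma reached_card t U : #|U| = t -> reached t U.
Proof.
elim: t U => [U /cards0_eq //|t IHt U cardU].
have /set0Pn [v vU] : U != set0 by rewrite -card_gt0 cardU.
exists (U :\ v), v; split; last by rewrite setD1K.
- by apply: IHt; move: cardU; rewrite (cardsD1 v) vU => -[].
- by apply: S_fresh; rewrite setD11.
Qed.

Lemma reached_strict t : (t < #|T|)%N -> ~ setfam_eq (reached t.+1) (reached t).
Proof.
move=> ltT same; have [U cardU] := exists_set_card ltT.
have /same /card_reached := reached_card cardU.
by rewrite cardU ltnn.
Qed.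

End FreshSupport.

Lemma reached_total (S_all : forall U u, S U u) t V :
  reached t.+1 V <-> (0 < #|V| <= t.+1)%N.
Proof.
have S_fresh U u : u \notin U -> S U u by move=> _; apply: S_all.
split=> [|/andP [V_gt0 V_le]].
  move=> rV; rewrite (card_reached rV) andbT.
  by case: rV => U [u [_ _ ->]]; apply/card_gt0P; exists u; rewrite setU11.
elim: t V V_gt0 V_le => [|t IHt] V V_gt0 V_le.
  by apply: (reached_card S_fresh); apply/eqP; rewrite eqn_leq V_le.
rewrite leq_eqVlt in V_le; case/orP: V_le => [/eqP /(reached_card S_fresh) //|V_le].
have /card_gt0P [v vV] := V_gt0.
exists V, v; split; [exact: IHt | exact: S_all | by apply/esym/setUidPr; rewrite sub1set].
Qed.

Section Length.
Hypothesis T_gt0 : (0 < #|T|)%N.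

Lemma growth_length_total : (forall U u, S U u) -> growth_length #|T|.
Proof.
move=> S_all; split; last by move=> t; apply: reached_strict.
move=> V; rewrite -{2}(prednK T_gt0) !reached_total // prednK // max_card.
by rewrite (leq_trans (max_card _)).
Qed.

Section FreshLength.
Hypotheses (S_fresh : forall U u, u \notin U -> S U u) (S_full : forall u, S setT u).
Hypothesis S_proper : forall U u, S U u -> u \in U -> U = setT.

Lemma reached_fresh t U : (t <= #|T|)%N -> reached t U <-> #|U| = t.
Proof.
move=> le_tT; split; last exact: reached_card.
elim: t U le_tT => [U _ ->|t IHt _ ltT [U [u [rU Su ->]]]]; first exact: cards0.
have cardU : #|U| = t by apply: IHt (ltnW ltT) rU.
have U_proper : U != setT.
  by apply: contraTneq ltT => UT; rewrite -cardU UT cardsT ltnn.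
have uU : u \notin U by apply: contra U_proper => /(S_proper Su) ->.
by rewrite cardsU1 uU cardU.
Qed.

Lemma growth_length_fresh : growth_length #|T|.
Proof.
split; last by move=> t; apply: reached_strict.
have full V : reached #|T| V <-> V = setT.
  rewrite reached_fresh //; split=> [cardV|->]; last exact: cardsT.
  by apply/eqP/negPn/negP => /card_ltT; rewrite cardV ltnn.
move=> V; rewrite full; split=> [[U [u [/full UT _ ->]]]|->]; first by rewrite UT setUT.
have /card_gt0P [u _] := T_gt0.
by exists setT, u; split; rewrite ?setUT //; apply/full.
Qed.

End FreshLength.
End Length.
End Growth.

Section Profiles.
Variables (R : realType) (n m : nat).
Implicit Types (s : 'I_n -> 'I_m -> R) (P : payoff R n m) (p q u : position n m).

Definition weight s p : R := \prod_(j < n) s j (p j).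

Lemma weight_ge0 s p : (forall j, is_mixed (s j)) -> 0 <= weight s p.
Proof. by move=> s_mixed; apply: prodr_ge0 => j _; case: (s_mixed j). Qed.

Lemma sum_weight s : (forall j, is_mixed (s j)) -> \sum_p weight s p = 1.
Proof.
move=> s_mixed; rewrite /weight -(bigA_distr_bigA (fun j a => s j a)).
by rewrite big1 // => j _; case: (s_mixed j).
Qed.

Lemma deviate_mixed s i t : (forall j, is_mixed (s j)) -> is_mixed t ->
  forall j, is_mixed (deviate s i t j).
Proof. by move=> s_mixed t_mixed j; rewrite /deviate; case: eqP. Qed.

Definition pure q : 'I_n -> 'I_m -> R := fun j a => if a == q j then 1 else 0.

Lemma pure_mixed q j : is_mixed (pure q j).
Proof.
split=> [a|]; first by rewrite /pure; case: eqP.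
by rewrite (bigD1 (q j)) //= /pure eqxx big1 ?addr0 // => a /negbTE ->.
Qed.

Lemma weight_pure q p : weight (pure q) p = if p == q then 1 else 0.
Proof.
case: eqP => [->|/eqP pq]; first by rewrite /weight big1 // => j _; rewrite /pure eqxx.
have [j pj] : exists j, p j != q j.
  by apply/existsP; apply: contraR pq => /existsPn agree; apply/eqP/ffunP => j; apply/eqP/negPn.
by rewrite /weight (bigD1 j) //= /pure (negbTE pj) mul0r.
Qed.

Lemma exp_payoff_pure P q i : exp_payoff P (pure q) i = P q i.
Proof.
rewrite /exp_payoff (bigD1 q) //= -/(weight _ q) weight_pure eqxx mul1r big1 ?addr0 //.
by move=> p /negbTE pq; rewrite -/(weight _ p) weight_pure pq mul0r.
Qed.

(* A mixed deviation of player [k] only weighs positions agreeing with [q] off [k]. *)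
Lemma pure_NE P q :
  (forall k p, (forall j, j != k -> p j = q j) -> P p k <= P q k) -> is_NE P (pure q).
Proof.
move=> no_gain; split=> [|k t t_mixed]; first exact: pure_mixed.
have d_mixed := deviate_mixed k (pure_mixed q) t_mixed.
rewrite exp_payoff_pure -[P q k]mul1r -(sum_weight d_mixed) mulr_suml.
apply: ler_sum => p _; rewrite -/(weight _ p).
case: (pickP [pred j | (j != k) && (p j != q j)]) => [j /andP [jk pj]|agree].
  by rewrite /weight (bigD1 j) //= /deviate (negbTE jk) /pure (negbTE pj) !mul0r.
apply: ler_wpM2l; first exact: weight_ge0.
by apply: no_gain => j jk; apply/eqP; move: (agree j) => /=; rewrite jk => /negbFE.
Qed.

Lemma exp_payoff_le_miss P s i u : (forall j, is_mixed (s j)) ->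
  (forall p, P p i <= 1) -> P u i = 0 -> exp_payoff P s i <= 1 - weight s u.
Proof.
move=> s_mixed P_le1 Pu0; rewrite -(sum_weight s_mixed) (bigD1 u) //= addrAC subrr add0r.
rewrite /exp_payoff (bigD1 u) //= Pu0 mulr0 add0r.
apply: ler_sum => p _; rewrite -[X in _ <= X]mulr1.
by apply: ler_wpM2l; [exact: weight_ge0 | exact: P_le1].
Qed.

End Profiles.
Arguments pure {R n m} q _ _.

Section Patched.
Variables (R : realType) (n m : nat).
Implicit Types (g : mgame R n m) (u : position n m) (U : {set position n m}).

Definition NME_support g u := exists2 sigma, NME g sigma & chi sigma u.

Lemma NME_support_pure g u :
  (forall i, exists2 tau, is_NE (subj g i) tau & tau i = pure u i) -> NME_support g u.
Proof.
move=> NE_u; exists (pure u) => [i|i]; last by rewrite /pure eqxx ltr01.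
by have [tau ? ?] := NE_u i; exists tau.
Qed.

Lemma AD_ext (M M' : mset R n m) : mset_eq M M' -> mset_eq (AD M) (AD M').
Proof.
by move=> MM' g; split=> -[h [s [u [/MM' Mh ? ? ->]]]]; exists h, s, u.
Qed.

Variables (A : payoff R n m) (F : 'I_n -> payoff R n m).

Definition patched U : mgame R n m :=
  MGame A (fun i p => if p \in U then A p else F i p).

Lemma update_patched U u : update (patched U) u = patched (u |: U).
Proof.
congr MGame; apply: functional_extensionality => i.
apply: functional_extensionality => p.
by rewrite in_setU1; case: eqP => [->|].
Qed.

Definition family (P : {set position n m} -> Prop) : mset R n m :=
  fun g => exists2 U, P U & g = patched U.

Let supported U := NME_support (patched U).

Lemma AD_family P : mset_eq (AD (family P)) (family (grow supported P)).
Proof.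
move=> g; split=> [[_ [sigma [u [[U PU ->] NME_sigma chi_u ->]]]]|].
  by exists (u |: U); [exists U, u; split=> //; exists sigma | exact: update_patched].
move=> [_ [U [u [PU [sigma NME_sigma chi_u] ->]]] ->].
by exists (patched U), sigma, u; split=> //; [exists U | rewrite update_patched].
Qed.

Lemma ADiter_patched t :
  mset_eq (ADiter t (singleton_mset (patched set0))) (family (reached supported t)).
Proof.
elim: t => [g|t IHt g]; first by split=> [->|[_ -> ->]]; [exists set0 |].
exact: iff_trans (AD_ext IHt g) (AD_family _ g).
Qed.

Lemma family_ext P Q : setfam_eq P Q -> mset_eq (family P) (family Q).
Proof. by move=> PQ g; split=> -[U /PQ PU ->]; exists U. Qed.

Hypothesis misinformed : forall p, exists i j, F i p j != A p j.

Lemma patched_inj : injective patched.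
Proof.
move=> U V /(congr1 (@subj R n m)) UV; apply/setP => p.
have [i [j Fij]] := misinformed p; move: (congr1 (fun f => f i p j) UV) => /=.
by case: (p \in U); case: (p \in V) => // FA; rewrite ?FA eqxx in Fij.
Qed.

Lemma family_inj P Q : mset_eq (family P) (family Q) -> setfam_eq P Q.
Proof.
move=> PQ U; split=> [PU|QU].
  by have [V QV /patched_inj ->] := (PQ (patched U)).1 (ex_intro2 _ _ U PU erefl).
by have [V PV /patched_inj ->] := (PQ (patched U)).2 (ex_intro2 _ _ U QU erefl).
Qed.

Lemma AD_length_patched L : growth_length supported L -> AD_length_is (patched set0) L.
Proof.
have E := ADiter_patched.
move=> [stable strict]; split=> [g|t ltL same].
  exact: iff_trans (E _ g) (iff_trans (family_ext stable g) (iff_sym (E _ g))).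
apply: (strict t ltL); apply: family_inj => g.
exact: iff_trans (iff_sym (E _ g)) (iff_trans (same g) (E _ g)).
Qed.

End Patched.

Definition zero_payoff (R : realType) (n m : nat) : payoff R n m := fun _ _ => 0.
Arguments zero_payoff {R n m} _ _.

Section ManyPlayers.
Variables (R : realType) (n m : nat).
Hypothesis n_gt1 : (1 < n)%N.
Implicit Types (U : {set position n m}) (p q u : position n m).

Definition others_lose : 'I_n -> payoff R n m := fun i _ j => if j == i then 0 else -1.

Lemma others_lose_misinformed p : exists i j, others_lose i p j != zero_payoff p j.
Proof.
by exists (Ordinal (ltnW n_gt1)), (Ordinal n_gt1); rewrite /others_lose /= oppr_eq0 oner_eq0.
Qed.

(* If some corrected [q] shares [u i], then [pure q] pays everybody the maximum 0;
   otherwise a deviation of [k != i] from [u] keeps [u i], hence stays uncorrected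
   and still pays [k] exactly -1. *)
Lemma NME_support_others_lose U u : NME_support (patched zero_payoff others_lose U) u.
Proof.
have payoff_le0 i p k : subj (patched zero_payoff others_lose U) i p k <= 0.
  by rewrite /= /others_lose; case: (p \in U) => //; case: (k == i); rewrite ?lerN10.
apply: NME_support_pure => i.
case: (pickP [pred q | (q \in U) && (q i == u i)]) => [q /andP [qU /eqP qi]|off_U].
  exists (pure q); last by rewrite /pure qi.
  by apply: pure_NE => k p _; rewrite /= qU; apply: payoff_le0.
have notin_U p : p i = u i -> p \notin U.
  by move=> pi; move: (off_U p) => /=; rewrite pi eqxx andbT => ->.
exists (pure u) => //; apply: pure_NE => k p agree.
rewrite /= (negbTE (notin_U u erefl)) /others_lose; case: (eqVneq k i) => [->|ki].
  exact: payoff_le0.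
by rewrite (negbTE (notin_U p (agree i _))) /= ?(negbTE ki) // eq_sym.
Qed.

End ManyPlayers.

Section OnePlayer.
Variables (R : realType) (m : nat).
Implicit Types (U : {set position 1 m}) (u : position 1 m).

Definition one_gains : 'I_1 -> payoff R 1 m := fun _ _ _ => 1.

Let game U := patched zero_payoff one_gains U.

Lemma one_gains_misinformed p : exists i j, one_gains i p j != zero_payoff p j.
Proof. by exists ord0, ord0; rewrite /one_gains oner_eq0. Qed.

Lemma NME_support_one_fresh U u : u \notin U -> NME_support (game U) u.
Proof.
move=> uU; apply: NME_support_pure => i; exists (pure u) => //.
apply: pure_NE => k p _; rewrite /= (negbTE uU) /one_gains.
by case: (p \in U); rewrite ?ler01.
Qed.

Lemma NME_support_one_full u : NME_support (game setT) u.
Proof.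
apply: NME_support_pure => i; exists (pure u) => //.
by apply: pure_NE => k p _; rewrite /= !in_setT.
Qed.

(* Deviating to an uncorrected [v] pays 1, whereas the weight [tau] puts on the
   corrected [u], which pays 0, keeps the payoff of [tau] below 1. *)
Lemma NME_support_one_proper U u : NME_support (game U) u -> u \in U -> U = setT.
Proof.
move=> [sigma NME_sigma chi_u] uU; apply/eqP; rewrite -subTset; apply/subsetP => v _.
apply/negPn/negP => vU.
have [tau [[tau_mixed tau_best] tau_sigma]] := NME_sigma ord0.
have := tau_best ord0 _ (pure_mixed R v ord0).
have -> : deviate tau ord0 (pure v ord0) = pure v.
  by apply: functional_extensionality => j; rewrite /deviate (ord1 j) eqxx.
rewrite exp_payoff_pure /= (negbTE vU) /one_gains => gain.
have miss : exp_payoff (subj (game U) ord0) tau ord0 <= 1 - weight tau u.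
  apply: exp_payoff_le_miss => // [p|]; last by rewrite /= uU.
  by rewrite /= /one_gains; case: (p \in U); rewrite ?ler01.
have w_gt0 : 0 < weight tau u by rewrite /weight big_ord1 tau_sigma; exact: chi_u.
by move: (le_trans gain miss); rewrite leNgt gtrBl w_gt0.
Qed.

End OnePlayer.

Theorem proposition16 (R : realType) (n m : nat) :
  (0 < n)%N -> (0 < m)%N ->
  exists mG : mgame R n m, AD_length_is mG (m ^ n).
Proof.
move=> n_gt0 m_gt0.
have card_position : #|position n m| = (m ^ n)%N by rewrite card_ffun !card_ord.
have position_gt0 : (0 < #|position n m|)%N by rewrite card_position expn_gt0 m_gt0.
rewrite -card_position; case: n n_gt0 position_gt0 {card_position} => [//|[|n]] _ position_gt0.
  exists (patched zero_payoff (@one_gains R m) set0).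
  apply: AD_length_patched; first exact: one_gains_misinformed.
  apply: growth_length_fresh => //.
  - exact: NME_support_one_fresh.
  - exact: NME_support_one_full.
  - exact: NME_support_one_proper.
exists (patched zero_payoff (@others_lose R n.+2 m) set0).
apply: AD_length_patched; first exact: others_lose_misinformed.
by apply: growth_length_total => // U u; apply: NME_support_others_lose.
Qed.
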